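(* Let $\{\psi^t\}$ be any feasible family of sub-problem potentials and let $|V^0| = \max_{t \in \mathcal{T}} |V^t|$. Define the simultaneously updated potentials $$\hat\psi^t_i(l) = \psi^t_i(l) - \frac{1}{|V^0|}\Big(\mu^t_i(l) - \tfrac{1}{|\mathcal{T}(i)|}\sum_{\bar t \in \mathcal{T}(i)} \mu^{\bar t}_i(l)\Big), \qquad \forall i \in V,\ t \in \mathcal{T}(i),\ l \in \mathcal{L},$$ where all max-marginals are computed with the pre-update potentials $\{\psi^t\}$. Then $\{\hat\psi^t\}$ is feasible and $D(\{\hat\psi^t\}) \le D(\{\psi^t\})$.
   Context: Let $G=(V,E)$ be a finite graph and $\mathcal{L}=\{1,\dots,L\}$ a finite label set. Unary scores $\psi_i \in \mathbb{R}^{\mathcal{L}}$ ($i \in V$) and pairwise scores $\phi_{ij} \in \mathbb{R}^{\mathcal{L}\times\mathcal{L}}$ ($ij \in E$) are given. Let $\mathcal{T}$ be a finite collection of trees (sub-problems), each tree $t$ being a subgraph of $G$ with vertex set $V^t$ and edge set $E^t \subseteq E$, such that every vertex of $V$ lies in at least one tree and every edge of $E$ lies in exactly one tree. Write $\mathcal{T}(i) = \{t \in \mathcal{T} : i \in V^t\}$. Each sub-problem $t$ carries unary potentials $\psi^t_i \in \mathbb{R}^{\mathcal{L}}$ for $i \in V^t$; the family $\{\psi^t\}$ is called feasible if $\sum_{t \in \mathcal{T}(i)} \psi^t_i = \psi_i$ for every $i \in V$. For a labeling $x : V^t \to \mathcal{L}$ define the tree energy $E^t(x) = \sum_{i \in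 V^t} \psi^t_i(x_i) + \sum_{ij \in E^t} \phi_{ij}(x_i,x_j)$. The max-energy of sub-problem $t$ is $\mu^t = \max_{x : V^t \to \mathcal{L}} E^t(x)$, and for $i \in V^t$, $l \in \mathcal{L}$ the max-marginal is $\mu^t_i(l) = \max_{x : V^t\to\mathcal{L},\ x_i = l} E^t(x)$. The dual objective is $D(\{\psi^t\}) = \sum_{t\in\mathcal{T}} \mu^t$. *)

From HB Require Import structures.
From mathcomp Require Import all_boot all_order all_algebra.
Set Implicit Arguments. Unset Strict Implicit. Unset Printing Implicit Defensive.
Import Order.TTheory GRing.Theory Num.Theory.
Local Open Scope ring_scope.

(* Maximum of f over the elements x of a finite type satisfying P
   (0 if no such element exists; never used in that case below). *)
Definition maxP (R : realFieldType) (T : finType) (P : pred T) (f : T -> R) : R :=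
  if [pick x | P x] is Some x0 then \big[Num.max/f x0]_(x | P x) f x else 0.

(* Graph G = (V, E): edges are an abstract finite type with endpoints
   src e, dst e.  Trees are indexed by a finite type Tr; tree t has vertex
   set Vt t, and each edge e belongs to exactly one tree, namely tr e
   (so E^t = [set e | tr e == t]). *)

Definition tree_adj (V E Tr : finType) (src dst : E -> V) (tr : E -> Tr) (t : Tr)
  : rel V :=
  fun u v => [exists e, (tr e == t) &&
                 (((src e == u) && (dst e == v)) || ((src e == v) && (dst e == u)))].

Definition is_tree (V E Tr : finType) (src dst : E -> V) (tr : E -> Tr)
  (Vt : Tr -> {set V}) (t : Tr) : Prop :=
  (forall u v, u \in Vt t -> v \in Vt t -> connect (tree_adj src dst tr t) u v)
  /\ (#|[set e | tr e == t]| + 1 = #|Vt t|)%N.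

Definition tree_energy (R : realFieldType) (V E Tr L : finType)
  (src dst : E -> V) (tr : E -> Tr) (Vt : Tr -> {set V})
  (phi : E -> L -> L -> R) (psit : Tr -> V -> L -> R)
  (t : Tr) (x : {ffun V -> L}) : R :=
  \sum_(i in Vt t) psit t i (x i) + \sum_(e | tr e == t) phi e (x (src e)) (x (dst e)).

Definition max_energy (R : realFieldType) (V E Tr L : finType)
  (src dst : E -> V) (tr : E -> Tr) (Vt : Tr -> {set V})
  (phi : E -> L -> L -> R) (psit : Tr -> V -> L -> R) (t : Tr) : R :=
  maxP predT (tree_energy src dst tr Vt phi psit t).

Definition max_marginal (R : realFieldType) (V E Tr L : finType)
  (src dst : E -> V) (tr : E -> Tr) (Vt : Tr -> {set V})
  (phi : E -> L -> L -> R) (psit : Tr -> V -> L -> R) (t : Tr) (i : V) (l : L) : R :=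
  maxP (fun x : {ffun V -> L} => x i == l) (tree_energy src dst tr Vt phi psit t).

Definition dual (R : realFieldType) (V E Tr L : finType)
  (src dst : E -> V) (tr : E -> Tr) (Vt : Tr -> {set V})
  (phi : E -> L -> L -> R) (psit : Tr -> V -> L -> R) : R :=
  \sum_(t : Tr) max_energy src dst tr Vt phi psit t.

Definition feasible (R : realFieldType) (V Tr L : finType) (Vt : Tr -> {set V})
  (psi : V -> L -> R) (psit : Tr -> V -> L -> R) : Prop :=
  forall i l, \sum_(t | i \in Vt t) psit t i l = psi i l.

Definition V0size (V Tr : finType) (Vt : Tr -> {set V}) : nat :=
  \max_(t : Tr) #|Vt t|.

(* The simultaneous update hat psi^t_i(l) (only meaningful for i in V^t). *)
Definition update (R : realFieldType) (V E Tr L : finType)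
  (src dst : E -> V) (tr : E -> Tr) (Vt : Tr -> {set V})
  (phi : E -> L -> L -> R) (psit : Tr -> V -> L -> R) : Tr -> V -> L -> R :=
  fun t i l =>
    psit t i l - (V0size Vt)%:R^-1 *
      (max_marginal src dst tr Vt phi psit t i l
       - (#|[set t' | i \in Vt t']|)%:R^-1 *
           \sum_(t' | i \in Vt t') max_marginal src dst tr Vt phi psit t' i l).

From HB Require Import structures.
From mathcomp Require Import all_boot all_order all_algebra ring.
Import Order.TTheory GRing.Theory Num.Theory.
Local Open Scope ring_scope.

(* Write c = 1/|V^0|, k_t = |V^t|, n_i = |T(i)|.  Since mu^t_i(x_i) >= E^t(x)
   for every i in V^t, the updated energy of x is at most
   (1 - c k_t) E^t(x) + c sum_{i in V^t} b_i, where b_i is the average of the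
   mu^t' over T(i); as c k_t <= 1 this is at most (1 - c k_t) mu^t + c sum b_i.
   Summing over t, double counting gives sum_t sum_{i in V^t} b_i =
   sum_t k_t mu^t, so the bounds add up exactly to D({psi^t}). *)

Lemma maxP_ge (R : realFieldType) (T : finType) (P : pred T) (f : T -> R) x :
  P x -> f x <= maxP P f.
Proof.
move=> Px; rewrite /maxP; case: pickP => [x0 _|nP]; last by rewrite nP in Px.
by rewrite (bigD1 x) //= le_max lexx.
Qed.

Lemma maxP_le (R : realFieldType) (T : finType) (P : pred T) (f : T -> R) b :
  (exists x, P x) -> (forall x, P x -> f x <= b) -> maxP P f <= b.
Proof.
move=> [x Px] fb; rewrite /maxP; case: pickP => [x0 Px0|nP]; last by rewrite nP in Px.
by elim/big_ind: _ => [|u v ub vb|y /fb //]; rewrite ?ge_max ?ub ?vb ?fb.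
Qed.

Lemma exchange_big_mem (R : nmodType) (V Tr : finType) (Vt : Tr -> {set V})
    (F : Tr -> V -> R) :
  \sum_t \sum_(i in Vt t) F t i = \sum_i \sum_(t | i \in Vt t) F t i.
Proof. by rewrite (exchange_big_dep predT). Qed.

Lemma sum_mem_const (R : pzSemiRingType) (V Tr : finType) (Vt : Tr -> {set V})
    i (a : R) :
  \sum_(t | i \in Vt t) a = #|[set t | i \in Vt t]|%:R * a.
Proof. by rewrite mulr_natl -sumr_const; apply: eq_bigl => t; rewrite inE. Qed.

Section SimultaneousUpdate.

Variables (R : realFieldType) (V E Tr L : finType).
Variables (src dst : E -> V) (tr : E -> Tr) (Vt : Tr -> {set V}).
Variables (phi : E -> L -> L -> R) (psit : Tr -> V -> L -> R).
Hypothesis cover : forall i : V, exists t : Tr, i \in Vt t.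

Local Notation energy := (tree_energy src dst tr Vt phi psit).
Local Notation mu := (max_energy src dst tr Vt phi psit).
Local Notation mm := (max_marginal src dst tr Vt phi psit).
Local Notation psit' := (update src dst tr Vt phi psit).
Local Notation n i := #|[set t | i \in Vt t]|.
Local Notation c := ((V0size Vt)%:R^-1 : R).

Lemma cover_count_neq0 i : (n i)%:R != 0 :> R.
Proof.
rewrite pnatr_eq0 -lt0n card_gt0; apply/set0Pn.
by have [t it] := cover i; exists t; rewrite inE.
Qed.

Lemma update_feasible psi : feasible Vt psi psit -> feasible Vt psi psit'.
Proof.
move=> feas i l; rewrite /update -(feas i l) sumrB -mulr_sumr sumrB.
by rewrite sum_mem_const mulrA mulfV ?cover_count_neq0 // mul1r subrr mulr0 subr0.
Qed.

Lemma V0size_scale_le1 t : c * #|Vt t|%:R <= 1.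
Proof.
have [->|V0_gt0] := posnP (V0size Vt); first by rewrite invr0 mul0r ler01.
rewrite mulrC ler_pdivrMr ?ltr0n // mul1r ler_nat.
by rewrite /V0size (bigD1 t) //= leq_maxl.
Qed.

Lemma energy_le_max_marginal t x i : energy t x <= mm t i (x i).
Proof. exact: maxP_ge. Qed.

Lemma max_marginal_le_max_energy t i l : mm t i l <= mu t.
Proof.
apply: maxP_le => [|y _]; last exact: maxP_ge.
by exists [ffun=> l]; rewrite ffunE.
Qed.

Definition mean_max_energy i := (n i)%:R^-1 * \sum_(t | i \in Vt t) mu t.

Lemma tree_energy_update t x :
  tree_energy src dst tr Vt phi psit' t x =
  energy t x - c * \sum_(i in Vt t) mm t i (x i)
  + c * \sum_(i in Vt t) ((n i)%:R^-1 * \sum_(t' | i \in Vt t') mm t' i (x i)).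
Proof.
rewrite /tree_energy /update sumrB -mulr_sumr sumrB mulrBr.
ring.
Qed.

Lemma tree_energy_update_le t x :
  tree_energy src dst tr Vt phi psit' t x <=
  (1 - c * #|Vt t|%:R) * mu t + c * \sum_(i in Vt t) mean_max_energy i.
Proof.
have c_ge0 : 0 <= c by rewrite invr_ge0 ler0n.
have marginals : #|Vt t|%:R * energy t x <= \sum_(i in Vt t) mm t i (x i).
  rewrite mulr_natl -(sumr_const (mem (Vt t))); apply: ler_sum => i _.
  exact: energy_le_max_marginal.
have means : \sum_(i in Vt t) ((n i)%:R^-1 * \sum_(t' | i \in Vt t') mm t' i (x i))
    <= \sum_(i in Vt t) mean_max_energy i.
  apply: ler_sum => i _; apply: ler_wpM2l; first by rewrite invr_ge0 ler0n.
  by apply: ler_sum => t' _; apply: max_marginal_le_max_energy.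
rewrite tree_energy_update; apply: lerD; last exact: ler_wpM2l.
apply: (@le_trans _ _ ((1 - c * #|Vt t|%:R) * energy t x)).
  by rewrite mulrBl mul1r -mulrA lerD2l lerN2 ler_wpM2l.
by rewrite ler_wpM2l ?subr_ge0 ?V0size_scale_le1 //; apply: maxP_ge.
Qed.

Lemma sum_mean_max_energy :
  \sum_t \sum_(i in Vt t) mean_max_energy i = \sum_t #|Vt t|%:R * mu t.
Proof.
rewrite exchange_big_mem.
under eq_bigr do rewrite sum_mem_const /mean_max_energy mulrA
  mulfV ?cover_count_neq0 // mul1r.
by rewrite -exchange_big_mem; apply: eq_bigr => t _; rewrite sumr_const mulr_natl.
Qed.

Lemma dual_update_le : (0 < #|L|)%N -> dual src dst tr Vt phi psit' <= dual src dst tr Vt phi psit.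
Proof.
case/card_gt0P=> l0 _.
pose B t := (1 - c * #|Vt t|%:R) * mu t + c * \sum_(i in Vt t) mean_max_energy i.
have B_sum : \sum_t B t = dual src dst tr Vt phi psit.
  rewrite big_split /= -mulr_sumr sum_mean_max_energy mulr_sumr -big_split /=.
  by apply: eq_bigr => t _; ring.
rewrite -B_sum; apply: ler_sum => t _; apply: maxP_le => [|x _].
  by exists [ffun=> l0].
exact: tree_energy_update_le.
Qed.

End SimultaneousUpdate.

Theorem theorem1 (R : realFieldType) (V E Tr L : finType)
  (src dst : E -> V) (tr : E -> Tr) (Vt : Tr -> {set V})
  (psi : V -> L -> R) (phi : E -> L -> L -> R) (psit : Tr -> V -> L -> R)
  (hL : (0 < #|L|)%N)
  (hcover : forall i : V, exists t : Tr, i \in Vt t)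
  (hedge : forall e : E, src e \in Vt (tr e) /\ dst e \in Vt (tr e))
  (htree : forall t : Tr, is_tree src dst tr Vt t)
  (hfeas : feasible Vt psi psit) :
  feasible Vt psi (update src dst tr Vt phi psit) /\
  dual src dst tr Vt phi (update src dst tr Vt phi psit)
    <= dual src dst tr Vt phi psit.
Proof.
split; first exact: update_feasible.
exact: dual_update_le.
Qed.
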